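(* Let $n\ge2$, let $(e_1,\dots,e_n)$ be the canonical basis of $\mathbb{R}^n$, let $E_{i,j}$ be the $n\times n$ matrix with $1$ in row $i$, column $j$ and $0$ elsewhere, and let $(E_{i,j}^* )$ be the dual basis of $\mathfrak{gl}(n,\mathbb{R})^*$. Define $\mathfrak{h}=\{A\in\mathfrak{sl}(n,\mathbb{R}):\exists\lambda\in\mathbb{R},\ A e_n=\lambda e_n\}$ and, for $\alpha=1,\dots,n$, the 2-form $\theta_\alpha$ on $\mathfrak{sl}(n,\mathbb{R})$ by $\theta_\alpha(A,B)=-E_{\alpha,n}^*([A,B])$ (the restriction of $dE^*_{\alpha,n}$). Then $(\mathfrak{h},\theta_1,\dots,\theta_n)$ is an $n$-symplectic structure on $\mathfrak{sl}(n,\mathbb{R})$ (here $\dim\mathfrak{sl}(n,\mathbb{R})=(n-1)(n+1)$ and $\dim\mathfrak{h}=n(n-1)$).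
   Context: A $k$-symplectic structure on a real Lie algebra $\mathfrak{g}$ of dimension $m(k+1)$ ($m,k\ge1$) is a pair consisting of a Lie subalgebra $\mathfrak{h}\subset\mathfrak{g}$ of dimension $mk$ and a family $(\theta_1,\dots,\theta_k)$ of skew-symmetric bilinear forms on $\mathfrak{g}$ such that: (i) $\bigcap_{i=1}^k\ker\theta_i=\{0\}$, where $\ker\theta_i=\{u\in\mathfrak{g}:\theta_i(u,v)=0\ \forall v\in\mathfrak{g}\}$; (ii) each $\theta_i$ is a 2-cocycle: $\theta_i([u,v],w)+\theta_i([v,w],u)+\theta_i([w,u],v)=0$ for all $u,v,w$; (iii) $\theta_i(u,v)=0$ for all $u,v\in\mathfrak{h}$ and all $i$. *)

From HB Require Import structures.
From mathcomp Require Import all_boot all_order all_algebra.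
Set Implicit Arguments. Unset Strict Implicit. Unset Printing Implicit Defensive.
Import Order.TTheory GRing.Theory Num.Theory.
Local Open Scope ring_scope.

Definition lie_bracket (R : comNzRingType) (n : nat) (A B : 'M[R]_n) : 'M[R]_n :=
  A *m B - B *m A.

Definition lie_subalgebra (R : fieldType) (n : nat) (g : {vspace 'M[R]_n}) : Prop :=
  forall A B, A \in g -> B \in g -> lie_bracket A B \in g.

(* k-symplectic structure (h, theta_1..theta_k) on the Lie algebra g
   (g a Lie subalgebra of gl(n,R)), of dimension m(k+1), m,k >= 1.
   The forms theta_i are given as functions on 'M_n; only their
   restriction to g matters. *)
Definition k_symplectic_structure (R : fieldType) (n k m : nat)
    (g h : {vspace 'M[R]_n}) (theta : 'I_k -> 'M[R]_n -> 'M[R]_n -> R) : Prop :=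
  [/\ (0 < m)%N, (0 < k)%N, lie_subalgebra g, \dim g = (m * k.+1)%N &
  [/\ (h <= g)%VS, lie_subalgebra h, \dim h = (m * k)%N &
  (
      (forall i a u v w, u \in g -> v \in g -> w \in g ->
         theta i (a *: u + v) w = a * theta i u w + theta i v w) /\
      (forall i a u v w, u \in g -> v \in g -> w \in g ->
         theta i w (a *: u + v) = a * theta i w u + theta i w v) /\
      (forall i u v, u \in g -> v \in g -> theta i u v = - theta i v u) /\
      (forall u, u \in g ->
         (forall i v, v \in g -> theta i u v = 0) -> u = 0) /\
      (forall i u v w, u \in g -> v \in g -> w \in g ->
         theta i (lie_bracket u v) w + theta i (lie_bracket v w) u
         + theta i (lie_bracket w u) v = 0) /\
      (forall i u v, u \in h -> v \in h -> theta i u v = 0))]].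

Lemma lt_pred_self (n : nat) : (0 < n)%N -> (n.-1 < n)%N.
Proof. by move=> hn; rewrite ltn_predL. Qed.

(* the last index n (0-based: n-1) of 'I_n *)
Definition last_idx (n : nat) (hn : (0 < n)%N) : 'I_n := Ordinal (lt_pred_self hn).

Definition can_vec (R : nzRingType) (n : nat) (i : 'I_n) : 'cV[R]_n := delta_mx i 0.

(* E*_{i,j}(M) = M i j ; theta_alpha(A,B) = - E*_{alpha,n}([A,B]) *)
Definition theta_sl (R : comNzRingType) (n : nat) (hn : (0 < n)%N)
   (alpha : 'I_n) (A B : 'M[R]_n) : R :=
  - (lie_bracket A B) alpha (last_idx hn).

From HB Require Import structures.
From mathcomp Require Import all_boot all_order all_algebra.
From mathcomp Require Import ring zify.
Set Implicit Arguments. Unset Strict Implicit. Unset Printing Implicit Defensive.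
Import Order.TTheory GRing.Theory Num.Theory.
Local Open Scope ring_scope.

(* The forms theta_alpha = -d E*_{alpha,n} are exact, hence bilinear,
   skew-symmetric and closed (closedness is the Jacobi identity).  Two
   elements of h both have e_n as an eigenvector, so their bracket kills
   e_n and all theta_alpha vanish on h.  Testing theta_alpha(u, -) against
   the elementary matrices E_{n,j} and E_{j,n} (j <> n) forces u to be a
   scalar matrix, which is 0 in sl(n) since n <> 0 in R.  The dimensions
   follow by writing sl(n) and h as kernels of the surjective linear maps
   tr and A |-> (column n of A, with its diagonal entry replaced by tr A). *)

Section LieBracket.
Variables (R : comNzRingType) (n : nat).
Implicit Types (A B C : 'M[R]_n) (a : R).

Lemma lie_bracket_anti A B : lie_bracket B A = - lie_bracket A B.
Proof. by rewrite /lie_bracket opprB. Qed.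

Lemma lie_bracketE A B (i j : 'I_n) : lie_bracket A B i j = (A *m B) i j - (B *m A) i j.
Proof. by rewrite /lie_bracket; move: (A *m B) (B *m A) => X Y; rewrite !mxE. Qed.

Lemma lie_bracketDZl a A B C :
  lie_bracket (a *: A + B) C = a *: lie_bracket A C + lie_bracket B C.
Proof.
by rewrite /lie_bracket mulmxDl mulmxDr -scalemxAl -scalemxAr opprD addrACA scalerBr.
Qed.

Lemma lie_bracketDZr a A B C :
  lie_bracket C (a *: A + B) = a *: lie_bracket C A + lie_bracket C B.
Proof.
by rewrite lie_bracket_anti lie_bracketDZl opprD -scalerN -!lie_bracket_anti.
Qed.

Lemma lie_bracket_jacobi A B C :
  lie_bracket (lie_bracket A B) C + lie_bracket (lie_bracket B C) A
  + lie_bracket (lie_bracket C A) B = 0.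
Proof.
rewrite /lie_bracket !mulmxBl !mulmxBr !mulmxA.
move: (A *m B *m C) (B *m A *m C) (C *m A *m B) (C *m B *m A) (B *m C *m A)
  (A *m C *m B) => x1 x2 x3 x4 x5 x6.
by apply/matrixP => i j; rewrite !mxE; ring.
Qed.

Lemma mxtrace_lie_bracket A B : \tr (lie_bracket A B) = 0.
Proof. by rewrite /lie_bracket raddfB /= mxtrace_mulC subrr. Qed.

Lemma lie_bracket_common_eigen (x : 'cV[R]_n) A B a b :
  A *m x = a *: x -> B *m x = b *: x -> lie_bracket A B *m x = 0.
Proof.
move=> Ax Bx; rewrite /lie_bracket mulmxBl -!mulmxA Ax Bx -!scalemxAr Ax Bx.
by rewrite !scalerA mulrC subrr.
Qed.

Lemma mul_mx_deltaE A (a b i j : 'I_n) :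
  (A *m delta_mx a b) i j = if b == j then A i a else 0.
Proof.
rewrite mxE (bigD1 a) //= big1 ?addr0 => [|k /negPf nka]; last first.
  by rewrite mxE nka mulr0.
by rewrite mxE eqxx /= [b == j]eq_sym; case: eqP; rewrite ?mulr1 ?mulr0.
Qed.

Lemma mul_delta_mxE A (a b i j : 'I_n) :
  (delta_mx a b *m A) i j = if i == a then A b j else 0.
Proof.
rewrite mxE (bigD1 b) //= big1 ?addr0 => [|k /negPf nkb]; last first.
  by rewrite mxE nkb andbF mul0r.
by rewrite mxE eqxx andbT; case: eqP; rewrite ?mul1r ?mul0r.
Qed.

Lemma mxtrace_delta (a b : 'I_n) : \tr (delta_mx a b : 'M[R]_n) = (a == b)%:R.
Proof.
rewrite /mxtrace (bigD1 a) //= big1 ?addr0 => [|k /negPf nka]; last first.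
  by rewrite mxE nka.
by rewrite mxE eqxx.
Qed.

Lemma mul_can_vec_eigenP (l : 'I_n) A :
  (exists lambda, A *m can_vec R l = lambda *: can_vec R l) <->
  (forall i, i != l -> A i l = 0).
Proof.
rewrite /can_vec -colE; split => [[lambda Ael] i il|Acol].
  by have := congr1 (fun x : 'cV_n => x i 0) Ael; rewrite !mxE (negPf il) mulr0.
exists (A l l); apply/matrixP => i j; rewrite (ord1 j) !mxE eqxx andbT.
by case: eqVneq => [->|/Acol ->]; rewrite ?mulr1 ?mulr0.
Qed.

End LieBracket.

Lemma dim_lker_onto (R : fieldType) (U V : vectType R) (f : 'Hom(U, V)) :
  (forall w, exists v, f v = w) -> \dim (lker f) = (\dim {:U} - \dim {:V})%N.
Proof.
move=> f_onto; rewrite -(limg_ker_dim f fullv) capfv.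
suff -> : limg f = fullv by rewrite addnK.
apply/vspaceP => w; rewrite memvf; have [v <-] := f_onto w.
exact: memv_img (memvf v).
Qed.

Section Subspaces.
Variables (R : fieldType) (n : nat).
Implicit Types A B : 'M[R]_n.

Definition sl_space : {vspace 'M[R]_n} := lker (linfun (@mxtrace R n : 'M[R]_n -> R^o)).

Lemma mem_sl A : (A \in sl_space) = (\tr A == 0).
Proof. by rewrite memv_ker lfunE. Qed.

Lemma sl_lie_subalgebra : lie_subalgebra sl_space.
Proof. by move=> A B _ _; rewrite mem_sl mxtrace_lie_bracket. Qed.

Lemma dim_sl : (0 < n)%N -> \dim sl_space = (n.-1 * n.+1)%N.
Proof.
move=> n_gt0; rewrite dim_lker_onto ?dimvf /= /dim /=; first by case: n n_gt0 => // k _; lia.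
move=> w; exists (w *: delta_mx (Ordinal n_gt0) (Ordinal n_gt0)).
by rewrite lfunE /= mxtraceZ mxtrace_delta eqxx mulr1.
Qed.

Variable l : 'I_n.

Definition trace_col A : 'rV[R]_n := \row_i (if i == l then \tr A else A i l).

Lemma trace_col_is_linear : linear trace_col.
Proof.
move=> a A B; apply/rowP => i; rewrite !mxE.
by case: eqP; rewrite ?mxtraceD ?mxtraceZ // !mxE.
Qed.

HB.instance Definition _ :=
  GRing.isLinear.Build R 'M[R]_n 'rV[R]_n _ trace_col trace_col_is_linear.

Definition stab_space : {vspace 'M[R]_n} := lker (linfun trace_col).

Lemma mem_stab A :
  A \in stab_space <->
  A \in sl_space /\ exists lambda, A *m can_vec R l = lambda *: can_vec R l.
Proof.
rewrite memv_ker lfunE mem_sl mul_can_vec_eigenP; split.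
  move/eqP/rowP => Acol; split; first by have := Acol l; rewrite !mxE eqxx => ->.
  by move=> i il; have := Acol i; rewrite !mxE (negPf il).
move=> [/eqP trA Acol]; apply/eqP/rowP => i; rewrite !mxE.
by case: eqVneq => [//|/Acol].
Qed.

Lemma stab_sub_sl : (stab_space <= sl_space)%VS.
Proof. by apply/subvP => A /mem_stab []. Qed.

Lemma stab_lie_subalgebra : lie_subalgebra stab_space.
Proof.
move=> A B /mem_stab [_ [a Ael]] /mem_stab [_ [b Bel]]; apply/mem_stab.
split; first by rewrite mem_sl mxtrace_lie_bracket.
by exists 0; rewrite scale0r (lie_bracket_common_eigen Ael Bel).
Qed.

Lemma dim_stab : (2 <= n)%N -> \dim stab_space = (n.-1 * n)%N.
Proof.
move=> n_ge2; have [i0 i0l] : exists i0 : 'I_n, i0 != l.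
  have lt_i0 : ((l == 0%N :> nat) < n)%N := leq_ltn_trans (leq_b1 _) n_ge2.
  by exists (Ordinal lt_i0); apply/eqP => /(congr1 val) /=; case: (val l) => [|[]].
rewrite dim_lker_onto ?dimvf /= /dim /= ?mul1n; first by case: n n_ge2 l i0 {i0l} => // k; lia.
move=> w; exists (\matrix_(i, j) if j == l then (if i == l then 0 else w 0 i)
                  else if (i == i0) && (j == i0) then w 0 l else 0).
apply/rowP => i; rewrite lfunE /= !mxE; case: eqVneq => [->|il].
  rewrite /mxtrace (bigD1 i0) //= big1 ?addr0 => [|k /negPf nki0]; last first.
    by rewrite mxE nki0; case: (k == l).
  by rewrite mxE (negPf i0l) eqxx.
by rewrite eqxx.
Qed.

End Subspaces.

Section ThetaForms.
Variables (R : comNzRingType) (n : nat) (n_gt0 : (0 < n)%N).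
Local Notation l := (last_idx n_gt0).
Local Notation theta := (theta_sl n_gt0).
Implicit Types (A B C u v : 'M[R]_n) (alpha : 'I_n).

Lemma theta_sl_linearl alpha a A B C :
  theta alpha (a *: A + B) C = a * theta alpha A C + theta alpha B C.
Proof. by rewrite /theta_sl lie_bracketDZl !mxE opprD mulrN. Qed.

Lemma theta_sl_linearr alpha a A B C :
  theta alpha C (a *: A + B) = a * theta alpha C A + theta alpha C B.
Proof. by rewrite /theta_sl lie_bracketDZr !mxE opprD mulrN. Qed.

Lemma theta_sl_skew alpha A B : theta alpha A B = - theta alpha B A.
Proof. by rewrite /theta_sl lie_bracket_anti mxE. Qed.

Lemma theta_sl_cocycle alpha A B C :
  theta alpha (lie_bracket A B) C + theta alpha (lie_bracket B C) A
  + theta alpha (lie_bracket C A) B = 0.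
Proof.
have := congr1 (fun M : 'M_n => M alpha l) (lie_bracket_jacobi A B C).
rewrite [lie_bracket]lock !mxE -lock => jacobi_entry.
by rewrite /theta_sl -!opprD jacobi_entry oppr0.
Qed.

Lemma theta_sl_common_eigen alpha A B a b :
  A *m can_vec R l = a *: can_vec R l -> B *m can_vec R l = b *: can_vec R l ->
  theta alpha A B = 0.
Proof.
move=> Ael Bel; have := congr1 (fun x : 'cV_n => x alpha 0) (lie_bracket_common_eigen Ael Bel).
by rewrite /can_vec -colE [lie_bracket]lock !mxE -lock /theta_sl => ->; rewrite oppr0.
Qed.

Lemma theta_sl_kernel_scalar u :
  (forall alpha v, \tr v = 0 -> theta alpha u v = 0) -> u = (u l l)%:M.
Proof.
move=> u_ker; have col_u j : j != l -> u j l = 0.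
  move=> jl; have := u_ker l (delta_mx l j).
  rewrite mxtrace_delta eq_sym (negPf jl) /theta_sl lie_bracketE.
  by rewrite mul_mx_deltaE mul_delta_mxE (negPf jl) eqxx sub0r opprK => ->.
have offcol_u i j : j != l -> u i j = if i == j then u l l else 0.
  move=> jl; have := u_ker i (delta_mx j l).
  rewrite mxtrace_delta (negPf jl) /theta_sl lie_bracketE mul_mx_deltaE mul_delta_mxE eqxx.
  by move/(_ erefl)/eqP; rewrite oppr_eq0 subr_eq0 => /eqP.
apply/matrixP => i j; rewrite mxE; case: (eqVneq j l) => [->|jl].
  by case: (eqVneq i l) => [->|/col_u ->]; rewrite ?mulr1n ?mulr0n.
by rewrite offcol_u //; case: eqP; rewrite ?mulr1n ?mulr0n.
Qed.

End ThetaForms.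

Lemma theta_sl_nondegenerate (R : numDomainType) (n : nat) (n_gt0 : (0 < n)%N)
    (u : 'M[R]_n) :
  \tr u = 0 -> (forall alpha v, \tr v = 0 -> theta_sl n_gt0 alpha u v = 0) ->
  u = 0.
Proof.
move=> tr_u /theta_sl_kernel_scalar u_scalar.
have : u (last_idx n_gt0) (last_idx n_gt0) *+ n = 0.
  by rewrite -mxtrace_scalar -u_scalar.
move/eqP; rewrite mulrn_eq0 eqn0Ngt n_gt0 => /eqP ull.
by rewrite u_scalar ull raddf0.
Qed.

Theorem mainTheorem10 (R : realFieldType) (n : nat) (hn : (2 <= n)%N) :
  exists (sl h : {vspace 'M[R]_n}),
    [/\ (forall A : 'M[R]_n, A \in sl <-> \tr A = 0),
        (forall A : 'M[R]_n, A \in h <->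
           (A \in sl /\ exists lambda : R,
              A *m can_vec R (last_idx (ltnW hn))
              = lambda *: can_vec R (last_idx (ltnW hn)))) &
        k_symplectic_structure n.-1 sl h (theta_sl (ltnW hn))].
Proof.
exists (sl_space R n), (stab_space R (last_idx (ltnW hn))).
have mem_sl_tr A : A \in sl_space R n <-> \tr A = 0 by rewrite mem_sl; split => /eqP.
split => //; first exact: mem_stab.
split; [lia | lia | exact: sl_lie_subalgebra | exact: dim_sl (ltnW hn) |].
split; [exact: stab_sub_sl | exact: stab_lie_subalgebra | exact: dim_stab |].
split; [by move=> *; apply: theta_sl_linearl|].
split; [by move=> *; apply: theta_sl_linearr|].
split; [by move=> *; apply: theta_sl_skew|].
split.
  move=> u /mem_sl_tr tr_u u_ker; apply: (theta_sl_nondegenerate (n_gt0 := ltnW hn) tr_u).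
  by move=> alpha v /mem_sl_tr; apply: u_ker.
split; [by move=> *; apply: theta_sl_cocycle|].
move=> alpha u v /mem_stab [_ [a uel]] /mem_stab [_ [b vel]].
exact: theta_sl_common_eigen uel vel.
Qed.
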